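(* If $0\le p<t\le 1$, then there exists a stake sequence $\gamma$ with $\pi(p,t)=\mathbf P(S_\gamma\ge t)$. Furthermore, for fixed $p$, the function $t\mapsto\pi(p,t)$ is left-continuous.
   Context: Let $\beta_1,\beta_2,\ldots$ be independent Bernoulli random variables with success probability $p$. A stake sequence is a sequence $\gamma=(c_1,c_2,\ldots)$ of non-negative reals with $c_1\ge c_2\ge\cdots$ and $\sum_i c_i=1$; write $S_\gamma=\sum_i c_i\beta_i$. For $0\le p\le t\le 1$ define $\pi(p,t)=\sup\{\mathbf P(S_\gamma\ge t)\mid \gamma \text{ a stake sequence}\}$. *)

From HB Require Import structures.
From mathcomp Require Import all_boot all_order all_algebra.
From mathcomp Require Import all_classical all_reals all_analysis.
Set Implicit Arguments. Unset Strict Implicit. Unset Printing Implicit Defensive.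
Import Order.TTheory GRing.Theory Num.Theory numFieldNormedType.Exports.
Local Open Scope classical_set_scope.
Local Open Scope ring_scope.

Definition mutually_independent (R : realType) (d : measure_display)
  (T : measurableType d) (P : probability T R) (b : nat -> T -> R) : Prop :=
  forall (s : seq nat) (A : nat -> set R),
    uniq s -> (forall i, measurable (A i)) ->
    P (\bigcap_(i in [set` s]) (b i @^-1` A i)) =
      (\prod_(i <- s) P (b i @^-1` A i))%E.

Definition bernoulli_seq (R : realType) (d : measure_display)
  (T : measurableType d) (P : probability T R) (p : R) (b : nat -> T -> R) : Prop :=
  [/\ (forall i, measurable_fun setT (b i)),
      (forall i x, b i x = 0 \/ b i x = 1),
      (forall i, P (b i @^-1` [set 1]) = p%:E)
    & mutually_independent P b].

(* stake sequence: non-negative, non-increasing, summing to 1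
   (indexed from 0 instead of 1) *)
Definition stake_seq (R : realType) (c : nat -> R) : Prop :=
  [/\ (forall i, 0 <= c i),
      (forall i, c i.+1 <= c i)
    & series c @ \oo --> (1:R)].

(* S_gamma = sum_i c_i b_i  (as an extended real; the series has
   non-negative terms) *)
Definition stake_sum (R : realType) (T : Type) (c : nat -> R)
  (b : nat -> T -> R) (x : T) : \bar R :=
  (\sum_(0 <= i <oo) (c i * b i x)%:E)%E.

Definition win_prob (R : realType) (d : measure_display) (T : measurableType d)
  (P : probability T R) (b : nat -> T -> R) (c : nat -> R) (t : R) : \bar R :=
  P [set x | (t%:E <= stake_sum c b x)%E].

Definition pi_fun (R : realType) (d : measure_display) (T : measurableType d)
  (P : probability T R) (b : nat -> T -> R) (t : R) : \bar R :=
  ereal_sup [set win_prob P b c t | c in [set c | stake_seq c]].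

From HB Require Import structures.
From mathcomp Require Import all_boot all_order all_algebra.
From mathcomp Require Import all_classical all_reals all_analysis.
From mathcomp Require Import measurable_realfun ring lra.
Import Order.TTheory GRing.Theory Num.Theory numFieldNormedType.Exports.
Local Open Scope classical_set_scope.
Local Open Scope ring_scope.

(* A compactness argument.  Let c_n be stake sequences winning at thresholds
   t_n -> t with probabilities tending to a.  By Tychonoff, some coordinatewise
   cluster point c of (c_n) is again nonnegative and nonincreasing, with total
   mass s <= 1.  Whether c_n wins is decided by its first N stakes up to an event
   of probability at most del^-2 c_n(N) <= del^-2 / (N + 1) (Chebyshev for the
   later stakes, whose squares sum to at most c_n(N)); those first stakes are
   close to the ones of c, and on average the mass 1 - s lost at infinity only
   contributes p (1 - s).  Hence P(S_c >= t - p (1 - s)) >= a.  As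
   s t <= t - p (1 - s), the stake sequence c / s wins at t with probability at
   least a (if s = 0 then a <= P(S_c >= t - p) = 0).  With t_n = t this shows
   that the supremum pi(p, t) is attained; with t_n increasing to t it shows
   lim_{s -> t-} pi(p, s) <= pi(p, t), the converse being monotonicity. *)

Set Implicit Arguments.
Unset Strict Implicit.
Unset Printing Implicit Defensive.

Section stake_series.
Context {R : realType}.
Implicit Types (c : nat -> R) (l : R).

Lemma nneg_series_le_cvg c l : (forall i, 0 <= c i) -> series c @ \oo --> l ->
  forall n, series c n <= l.
Proof.
move=> c0 cl n.
have nd : {homo series c : m k / (m <= k)%N >-> m <= k}.
  by move=> m k mk; apply: (nondecreasing_series (P := xpredT) (m := 0%N)).
by have := nondecreasing_cvgn_le nd (cvgP _ cl) n; rewrite (cvg_lim _ cl).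
Qed.

Lemma series_split c m n : (m <= n)%N ->
  series c n = series c m + \sum_(m <= i < n) c i.
Proof. by move=> mn; rewrite /series /= (big_cat_nat (leq0n m) mn). Qed.

Lemma stake_seq_nonincreasing c : stake_seq c -> nonincreasing_seq c.
Proof. by case=> _ cn _; apply/nonincreasing_seqP. Qed.

Lemma stake_seq_le_harmonic c n : stake_seq c -> c n <= harmonic n.
Proof.
move=> cs; have [c0 _ c1] := cs.
have : n.+1%:R * c n <= series c n.+1.
  rewrite /series /= mulr_natl -[in X in X <= _](subn0 n.+1) -sumr_const_nat.
  by apply: ler_sum_nat => i /andP[_ iN]; exact: stake_seq_nonincreasing.
move/le_trans/(_ (nneg_series_le_cvg c0 c1 n.+1)).
by rewrite /harmonic /= -ler_pdivlMl ?ltr0Sn // mulr1.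
Qed.

Lemma stake_seq_le1 c i : stake_seq c -> 0 <= c i <= 1.
Proof.
move=> cs; have [c0 _ _] := cs; rewrite c0 /=.
apply: le_trans (stake_seq_le_harmonic i cs) _.
by rewrite /harmonic /= invf_le1 ?ltr0Sn // ler1n.
Qed.

Lemma sqr_stake_sum_le c m n : stake_seq c -> \sum_(m <= i < n) c i ^+ 2 <= c m.
Proof.
move=> cs; have [c0 _ c1] := cs.
apply: (@le_trans _ _ (c m * \sum_(m <= i < n) c i)).
  rewrite mulr_sumr; apply: ler_sum_nat => i /andP[mi _].
  by rewrite expr2 ler_wpM2r // stake_seq_nonincreasing.
rewrite -[leRHS]mulr1 ler_wpM2l //.
have [mn|nm] := leqP m n; last by rewrite big_geq 1?ltnW // ler01.
have := nneg_series_le_cvg c0 c1 n; rewrite (series_split c mn).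
have : 0 <= series c m by apply: sumr_ge0.
lra.
Qed.

Lemma stake_seq_divr c (s : R) : 0 < s -> (forall i, 0 <= c i) ->
  (forall i, c i.+1 <= c i) -> series c @ \oo --> s -> stake_seq (fun i => c i / s).
Proof.
move=> s0 c0 cn cs; split => [i|i|].
- by rewrite divr_ge0 // ltW.
- by rewrite ler_pM2r ?invr_gt0.
have -> : series (fun i => c i / s) = (fun n => series c n * s^-1).
  by apply/funext => n; rewrite /series /= mulr_suml.
by rewrite -(divff (lt0r_neq0 s0)); apply: cvgM => //; exact: cvg_cst.
Qed.

End stake_series.

(* [c] is a cluster point of [u] for the product topology of [R^nat]. *)
Definition coord_cluster {R : realType} (u : nat -> nat -> R) (c : nat -> R) :=
  forall N eta, 0 < eta -> forall n0, exists2 n, (n0 <= n)%N &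
    forall i, (i < N)%N -> `|u n i - c i| < eta.

Lemma exists_coord_cluster {R : realType} (u : nat -> nat -> R) :
  (forall n i, 0 <= u n i <= 1) -> exists c, coord_cluster u c.
Proof.
move=> u01.
have cube := @tychonoff nat (fun _ => R) (fun _ => `[0, 1]%classic)
  (fun _ => @segment_compact R 0 1).
pose F := (fun n => (u n : forall i : nat, R)) @ \oo.
have [|c [_ clc]] := cube F (fmap_proper_filter _ _).
  by exists 0%N => // n _ i /=; rewrite in_itv /= u01.
exists c => N eta eta0 n0.
pose B := [set f : forall i : nat, R | forall i, (i < N)%N -> `|f i - c i| < eta].
have nB : nbhs c B.
  rewrite {}/B; elim: N => [|N IH]; first by apply: filterS filterT => f _ i.
  have cN := @proj_continuous nat (fun _ => R) N c _ (nbhsx_ballx (c N) _ eta0).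
  apply: filterS (filterI IH cN) => f [fB fN] i.
  rewrite ltnS leq_eqVlt => /orP[/eqP->|/fB//].
  by move: fN; rewrite /ball /= distrC.
have [|f [[n n0n ->] fB]] := clc (fun f => exists2 n, (n0 <= n)%N & f = u n) B _ nB.
  by exists n0 => // n /= n0n; exists n.
by exists n.
Qed.

Lemma cluster_sub_stake {R : realType} (u : nat -> nat -> R) c :
  (forall n, stake_seq (u n)) -> coord_cluster u c ->
  [/\ forall i, 0 <= c i, forall i, c i.+1 <= c i & forall n, series c n <= 1].
Proof.
move=> us uc; split => [i|i|N].
- apply/ler_addgt0Pr => e e0; have [n _ /(_ i (ltnSn i))] := uc i.+1 e e0 0%N.
  have [u0 _ _] := us n; have := u0 i.
  by rewrite ltr_norml => u0i /andP[lo hi]; lra.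
- apply/ler_addgt0Pr => e e0; have e2 : 0 < e / 2 by rewrite divr_gt0.
  have [n _ close] := uc i.+2 _ e2 0%N.
  have := close i.+1 (ltnSn _); have := close i (ltnW (ltnSn _)).
  have [_ un _] := us n; have := un i.
  by rewrite !ltr_norml => un_i /andP[lo hi] /andP[lo' hi']; lra.
- apply/ler_addgt0Pr => e e0; have eN : 0 < e / N.+1%:R by rewrite divr_gt0.
  have [n _ close] := uc N _ eN 0%N; have [u0 _ u1] := us n.
  apply: (@le_trans _ _ (\sum_(0 <= i < N) (u n i + e / N.+1%:R))).
    apply: ler_sum_nat => i /andP[_ iN].
    have := close i iN; rewrite ltr_norml => /andP[lo hi].
    by set q := e / N.+1%:R in lo hi *; lra.
  rewrite big_split /= sumr_const_nat subn0 lerD //; first exact: nneg_series_le_cvg.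
  rewrite -[_ *+ N]mulr_natr -mulrA ler_piMr ?(ltW e0) // mulrC ler_pdivrMr ?ltr0Sn //.
  by rewrite mul1r ler_nat.
Qed.

Section stake_sum_bounds.
Context {R : realType} {T : Type} (b : nat -> T -> R).
Hypothesis b01 : forall i x, 0 <= b i x <= 1.
Implicit Types (c : nat -> R) (x : T).

Lemma partial_stake_sum_le c n x : (forall i, 0 <= c i) ->
  ((\sum_(0 <= i < n) c i * b i x)%:E <= stake_sum c b x)%E.
Proof.
move=> c0; rewrite /stake_sum -sumEFin.
apply: nneseries_lim_ge => i _ _; rewrite lee_fin.
by apply: mulr_ge0 => //; case/andP: (b01 i x).
Qed.

Lemma stake_sum_le_partial c l n x : (forall i, 0 <= c i) ->
  series c @ \oo --> l ->
  (stake_sum c b x <= (\sum_(0 <= i < n) c i * b i x + (l - series c n))%:E)%E.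
Proof.
move=> c0 cl; rewrite /stake_sum; apply: lime_le.
  apply: is_cvg_nneseries => i _ _; rewrite lee_fin.
  by apply: mulr_ge0 => //; case/andP: (b01 i x).
apply: nearW => m; rewrite sumEFin lee_fin.
pose F i := c i * b i x.
change (\sum_(0 <= i < m) F i <= \sum_(0 <= i < n) F i + (l - series c n)).
have mn := leq_maxr m n.
have head : \sum_(0 <= i < maxn m n) F i =
    \sum_(0 <= i < m) F i + \sum_(m <= i < maxn m n) F i.
  exact: big_cat_nat (leq0n m) (leq_maxl m n).
have tail : \sum_(0 <= i < maxn m n) F i =
    \sum_(0 <= i < n) F i + \sum_(n <= i < maxn m n) F i.
  exact: big_cat_nat (leq0n n) mn.
have head_ge0 : 0 <= \sum_(m <= i < maxn m n) F i.
  by apply: sumr_ge0 => i _; apply: mulr_ge0 => //; case/andP: (b01 i x).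
have tail_le : \sum_(n <= i < maxn m n) F i <= l - series c n.
  apply: (@le_trans _ _ (\sum_(n <= i < maxn m n) c i)).
    apply: ler_sum => i _; rewrite -[leRHS]mulr1 ler_wpM2l //.
    by case/andP: (b01 i x).
  by rewrite lerBrDl -(series_split c mn); exact: nneg_series_le_cvg.
lra.
Qed.

Lemma stake_sum_divr c (s : R) x : 0 < s -> (forall i, 0 <= c i) ->
  stake_sum (fun i => c i / s) b x = ((s^-1)%:E * stake_sum c b x)%E.
Proof.
move=> s0 c0; rewrite /stake_sum -nneseriesZl; last first.
  by move=> i _; rewrite lee_fin mulr_ge0 // (andP (b01 i x)).1.
congr (lim (_ @ \oo)); apply/funext => n.
by apply: eq_bigr => i _; rewrite -EFinM mulrCA mulrA.
Qed.

End stake_sum_bounds.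

Section measure_lemmas.
Context {R : realType} {d : measure_display} {T : measurableType d}.
Variable P : probability T R.

Lemma measurable_fun_ge (f : T -> R) a : measurable_fun setT f ->
  measurable [set x | a <= f x].
Proof.
move=> mf; have := mf measurableT _ (measurable_itv `[a, +oo[).
by rewrite setTI; congr measurable; apply/seteqP; split => x /=; rewrite in_itv /= andbT.
Qed.

Lemma bounded_integrable (f : T -> R) (k : R) : measurable_fun setT f ->
  (forall x, `|f x| <= k) -> P.-integrable setT (EFin \o f).
Proof.
move=> mf fk; apply: measurable_bounded_integrable => //.
  by rewrite (le_lt_trans (probability_le1 P measurableT)) ?ltry.
rewrite /bounded_near; near=> M => x _ /=; apply: le_trans (fk x) _.
by near: M; apply: nbhs_pinfty_ge; exact: num_real.
Unshelve. all: end_near.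
Qed.

Lemma norm_scaled_indic_le (A : set T) (k : R) x : `|k * \1_A x| <= `|k|.
Proof.
by rewrite normrM -[leRHS]mulr1 ler_wpM2l // indicE; case: (_ \in _); rewrite ?normr1 ?normr0.
Qed.

Lemma integral_indic_add (A : set T) a k (g : T -> R) (m : R) : measurable A ->
  P A = a%:E -> measurable_fun setT g -> (forall x, `|g x| <= m) ->
  (\int[P]_x ((k * \1_A x + g x)%:E) = (k * a)%:E + \int[P]_x (g x)%:E)%E.
Proof.
move=> mA PA mg gm.
have ikA : P.-integrable setT (fun x => (k * \1_A x)%:E).
  apply: (@bounded_integrable _ `|k|); last exact: norm_scaled_indic_le.
  by apply: measurable_funM => //; exact: measurable_indic.
under eq_integral do rewrite EFinD.
rewrite integralD //; last exact: bounded_integrable gm.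
congr (_ + _)%E; under eq_integral do rewrite EFinM.
rewrite integralZl //; last exact: integrable_indic.
by rewrite integral_indic // setIT EFinM; congr (_ * _)%E.
Qed.

Lemma integral_indic3 (A B C : set T) a b c k1 k2 k3 k4 :
  measurable A -> measurable B -> measurable C ->
  P A = a%:E -> P B = b%:E -> P C = c%:E ->
  (\int[P]_x ((k1 * \1_A x + (k2 * \1_B x + (k3 * \1_C x + k4)))%:E)
   = (k1 * a + (k2 * b + (k3 * c + k4)))%:E)%E.
Proof.
move=> mA mB mC PA PB PC.
have mI (D : set T) (k : R) : measurable D -> measurable_fun setT (fun x => k * \1_D x).
  by move=> mD; apply: measurable_funM => //; exact: measurable_indic.
have nI := norm_scaled_indic_le.
rewrite (@integral_indic_add A a k1 _ (`|k2| + (`|k3| + `|k4|))) //; last 2 first.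
- by apply: measurable_funD; [exact: mI | apply: measurable_funD; [exact: mI|]].
- move=> x; apply: (le_trans (ler_normD _ _)); apply: lerD => //.
  by apply: (le_trans (ler_normD _ _)); exact: lerD.
rewrite (@integral_indic_add B b k2 _ (`|k3| + `|k4|)) //; last 2 first.
- by apply: measurable_funD; [exact: mI|].
- by move=> x; apply: (le_trans (ler_normD _ _)); apply: lerD.
rewrite (@integral_indic_add C c k3 _ `|k4|) // integral_cst //.
have -> : (k4%:E * P setT = k4%:E)%E.
  by rewrite -[RHS]mule1; congr (_ * _)%E; exact: probability_setT.
by rewrite -!EFinD.
Qed.

Lemma win_prob_eq0 (b : nat -> T -> R) (c : nat -> R) t : (forall i, 0 <= c i) ->
  series c @ \oo --> 0 -> 0 < t -> win_prob P b c t = 0%E.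
Proof.
move=> c0 c_0 t0.
have c_eq0 i : c i = 0.
  apply/eqP; rewrite eq_le c0 andbT.
  have := nneg_series_le_cvg c0 c_0 i.+1; rewrite /series /= big_nat_recr //=.
  have : 0 <= \sum_(0 <= k < i) c k by apply: sumr_ge0.
  lra.
rewrite /win_prob (_ : [set x | _] = set0) ?measure0 //.
apply/seteqP; split => x //=; rewrite /stake_sum eseries0 ?lee_fin ?leNgt ?t0 //.
by move=> i _ _; rewrite c_eq0 mul0r.
Qed.

End measure_lemmas.

Section bernoulli.
Context {R : realType} {d : measure_display} {T : measurableType d}.
Variables (P : probability T R) (p : R) (b : nat -> T -> R).
Hypothesis hb : bernoulli_seq P p b.
Implicit Types (c u : nat -> R) (x : T) (t del : R).

Lemma measurable_bernoulli i : measurable_fun setT (b i).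
Proof. by case: hb => mb _ _ _; exact: mb. Qed.

Lemma bernoulli_itv i x : 0 <= b i x <= 1.
Proof. by case: hb => _ b01 _ _; case: (b01 i x) => ->; rewrite lexx ?ler01. Qed.

Let success i := b i @^-1` [set 1].

Let measurable_success i : measurable (success i).
Proof.
by have := measurable_bernoulli i measurableT (measurable_set1 (1 : R)); rewrite setTI.
Qed.

Let P_success i : P (success i) = p%:E.
Proof. by case: hb => _ _ Pb _; exact: Pb. Qed.

Let bernoulli_indic i x : b i x = \1_(success i) x.
Proof.
rewrite indicE /success; case: hb => _ b01 _ _; case: (b01 i x) => bix; rewrite bix.
  by rewrite memNset //= bix => /esym/eqP; rewrite oner_eq0.
by rewrite mem_set.
Qed.

Let P_success2 i j : i != j -> P (success i `&` success j) = (p * p)%:E.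
Proof.
move=> ij; case: hb => _ _ _ indep.
have := indep [:: i; j] (fun _ => [set 1]) _ (fun _ => measurable_set1 _).
rewrite /= inE ij !big_cons big_nil mule1 -!/(success _) !P_success -EFinM => /(_ isT) <-.
congr (P _); apply/seteqP; split => x /=.
  by move=> [bi bj] k; rewrite /= !inE => /orP[/eqP->|/eqP->].
by move=> bk; split; apply: bk; rewrite /= !inE eqxx ?orbT.
Qed.

Lemma bernoulli_p_ge0 : 0 <= p.
Proof. by rewrite -lee_fin -(P_success 0); exact: measure_ge0. Qed.

Lemma bernoulli_p_le1 : p <= 1.
Proof. by rewrite -lee_fin -(P_success 0); exact: probability_le1. Qed.

Lemma bernoulli_centred_norm i x : `|b i x - p| <= 1.
Proof.
have /andP[b0 b1] := bernoulli_itv i x.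
have p0 := bernoulli_p_ge0; have p1 := bernoulli_p_le1.
by rewrite ler_norml; apply/andP; split; lra.
Qed.

Definition centred_sum u m n x := \sum_(m <= i < n) u i * (b i x - p).

Lemma centred_sumE u m n x : centred_sum u m n x =
  \sum_(m <= i < n) u i * b i x - p * \sum_(m <= i < n) u i.
Proof. by rewrite /centred_sum mulr_sumr -sumrB; apply: eq_bigr => i _; ring. Qed.

Lemma measurable_centred_sum u m n : measurable_fun setT (centred_sum u m n).
Proof.
apply: measurable_sum => i; apply: measurable_funM; first exact: measurable_cst.
by apply: measurable_funB; [exact: measurable_bernoulli | exact: measurable_cst].
Qed.

Lemma integral_centred_pair i j k :
  (\int[P]_x ((k * ((b i x - p) * (b j x - p)))%:E)
   = (k * (if i == j then p * (1 - p) else 0))%:E)%E.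
Proof.
have [<-|ij] := eqVneq.
  (* padded with zero terms to fit [integral_indic3] *)
  rewrite (eq_integral (fun x => ((k * (1 - 2 * p)) * \1_(success i) x +
      (0 * \1_(success i) x + (0 * \1_(success i) x + k * (p * p))))%:E)); last first.
    move=> x _; rewrite bernoulli_indic; congr (_%:E).
    set v := \1_(success i) x.
    have vv : v * v = v by rewrite /v -[in RHS](setIid (success i)) indicI.
    have -> : (v - p) * (v - p) = v * v - 2 * p * v + p * p by ring.
    by rewrite vv; ring.
  by rewrite (@integral_indic3 _ _ _ _ _ _ _ p p p) //; congr (_%:E); ring.
rewrite (eq_integral (fun x => (k * \1_(success i `&` success j) x +
    ((- k * p) * \1_(success i) x + ((- k * p) * \1_(success j) x + k * (p * p))))%:E));
  last by move=> x _; rewrite !bernoulli_indic indicI /=; congr (_%:E); ring.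
rewrite (@integral_indic3 _ _ _ _ _ _ _ (p * p) p p) ?P_success2 //; last exact: measurableI.
by congr (_%:E); ring.
Qed.

Lemma integral_centred_sum_sqr u m n :
  (\int[P]_x ((centred_sum u m n x ^+ 2)%:E)
   = (p * (1 - p) * \sum_(m <= i < n) u i ^+ 2)%:E)%E.
Proof.
pose g i j x := u i * u j * ((b i x - p) * (b j x - p)).
have mg i j : measurable_fun setT (g i j).
  apply: measurable_funM; first exact: measurable_cst.
  by apply: measurable_funM; apply: measurable_funB;
    [exact: measurable_bernoulli | exact: measurable_cst
    |exact: measurable_bernoulli | exact: measurable_cst].
have gn i j x : `|g i j x| <= `|u i * u j|.
  rewrite /g normrM -[leRHS]mulr1 ler_wpM2l // normrM.
  by rewrite -[1]mulr1 ler_pM // bernoulli_centred_norm.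
rewrite (eq_integral (fun x => \sum_(m <= i < n) (\sum_(m <= j < n) g i j x)%:E)); last first.
  move=> x _; rewrite sumEFin /centred_sum expr2 mulr_suml; congr (_%:E).
  by apply: eq_bigr => i _; rewrite mulr_sumr; apply: eq_bigr => j _; rewrite /g; ring.
rewrite integral_sum //; last first.
  move=> i; apply: (@bounded_integrable _ _ _ _ _ (\sum_(m <= j < n) `|u i * u j|)).
    by apply: measurable_sum => j; exact: mg.
  by move=> x; apply: (le_trans (ler_norm_sum _ _ _)); apply: ler_sum => j _; exact: gn.
rewrite big_distrr /= -sumEFin; apply: eq_big_nat => i min.
under eq_integral do rewrite -sumEFin.
rewrite integral_sum //; last first.
  by move=> j; apply: (@bounded_integrable _ _ _ _ _ `|u i * u j|) => // x; exact: gn.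
under eq_bigr do rewrite /g integral_centred_pair.
rewrite sumEFin; congr (_%:E).
rewrite (bigD1_seq i) /= ?mem_index_iota ?iota_uniq //.
rewrite eqxx big1 ?addr0; first by ring.
by move=> j /negbTE; rewrite eq_sym => ->; rewrite mulr0.
Qed.

Lemma centred_sum_tail_le u m n del : 0 < del ->
  (P [set x | (del <= centred_sum u m n x)%R] <=
     (del ^- 2 * \sum_(m <= i < n) u i ^+ 2)%:E)%E.
Proof.
move=> del0; set Y := centred_sum u m n; set A := [set x | del <= Y x].
have mA : measurable A by apply: measurable_fun_ge; exact: measurable_centred_sum.
rewrite EFinM lee_pdivlMl ?exprn_gt0 //.
apply: (@le_trans _ _ (\int[P]_x ((Y x ^+ 2)%:E))%E); last first.
  rewrite integral_centred_sum_sqr lee_fin ler_piMl ?sumr_ge0 // => [i _|].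
    exact: sqr_ge0.
  by have := bernoulli_p_ge0; have := bernoulli_p_le1; nra.
have -> : P A = (\int[P]_x (\1_A x)%:E)%E by rewrite integral_indic // setIT.
rewrite -integralZl //; last exact: integrable_indic.
apply: ge0_le_integral => //.
- by move=> x _; rewrite -EFinM lee_fin mulr_ge0 ?sqr_ge0 // indicE ler0n.
- apply: emeasurable_funM; first exact: measurable_cst.
  by apply/measurable_EFinP; exact: measurable_indic.
- by apply/measurable_EFinP; apply: measurable_funX; exact: measurable_centred_sum.
move=> x _; rewrite -EFinM lee_fin indicE.
have [/set_mem xA|_] := boolP (x \in A); last by rewrite mulr0 sqr_ge0.
by rewrite mulr1 ler_sqr ?nnegrE ?(ltW del0) // (le_trans (ltW del0) xA).
Qed.

Lemma centred_sum_le_close u c N eta x :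
  (forall i, (i < N)%N -> `|u i - c i| < eta) ->
  centred_sum u 0 N x <= centred_sum c 0 N x + N%:R * eta.
Proof.
move=> uc; rewrite /centred_sum -[N in N%:R](subn0 N) mulr_natl -sumr_const_nat.
rewrite -big_split /=; apply: ler_sum_nat => i /andP[_ iN].
have : (u i - c i) * (b i x - p) <= eta.
  apply: le_trans (ler_norm _) _; rewrite normrM -[eta]mulr1.
  by rewrite ler_pM ?bernoulli_centred_norm // ltW // uc.
lra.
Qed.

Lemma measurable_win_set c t : (forall i, 0 <= c i) ->
  measurable [set x | (t%:E <= stake_sum c b x)%E].
Proof.
move=> c0; rewrite -[X in measurable X]setTI.
apply: (emeasurable_fun_c_infty (D := setT)) => //.
apply: (@ge0_emeasurable_sum _ _ _ setT (fun i x => (c i * b i x)%:E) xpredT).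
  by move=> k x _ _; rewrite lee_fin mulr_ge0 // (andP (bernoulli_itv k x)).1.
move=> k _; apply/measurable_EFinP; apply: measurable_funM; first exact: measurable_cst.
exact: measurable_bernoulli.
Qed.

Lemma win_prob_nonincreasing c t1 t2 : (forall i, 0 <= c i) -> t1 <= t2 ->
  (win_prob P b c t2 <= win_prob P b c t1)%E.
Proof.
move=> c0 t12; apply: le_measure; rewrite ?inE; try exact: measurable_win_set.
by move=> x /=; apply: le_trans; rewrite lee_fin.
Qed.

Lemma win_prob_divr c s t : 0 < s -> (forall i, 0 <= c i) ->
  win_prob P b (fun i => c i / s) t = win_prob P b c (s * t).
Proof.
move=> s0 c0; rewrite /win_prob; congr (P _); apply/funext => x /=.
by rewrite (stake_sum_divr bernoulli_itv) // lee_pdivlMl // -EFinM.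
Qed.

Lemma win_prob_ge_approx c t a : (forall i, 0 <= c i) ->
  (forall e, 0 < e -> (a%:E <= win_prob P b c (t - e) + e%:E)%E) ->
  (a%:E <= win_prob P b c t)%E.
Proof.
move=> c0 ha.
pose F k := [set x | ((t - harmonic k)%:E <= stake_sum c b x)%E].
have mF k : measurable (F k) by exact: measurable_win_set.
have capF : \bigcap_k F k = [set x | (t%:E <= stake_sum c b x)%E].
  apply/seteqP; split => x /=; last first.
    move=> tx k _; apply: le_trans tx; rewrite lee_fin lerBlDr lerDl.
    exact: harmonic_ge0.
  move=> Fx; apply/lee_addgt0Pr => e e0.
  have /cvgrPdist_lt /(_ e e0) [k0 _ /(_ k0 (leqnn k0))] := @cvg_harmonic R.
  rewrite /= sub0r normrN ger0_norm ?harmonic_ge0 // => hk.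
  apply: (@le_trans _ _ ((t - harmonic k0)%:E + (harmonic k0)%:E)%E).
    by rewrite -EFinD subrK.
  by rewrite leeD // ?(Fx k0) // lee_fin ltW.
have Fn : nonincreasing_seq F.
  move=> m n mn; apply/subsetPset => x /=; apply: le_trans; rewrite lee_fin lerB //.
  by rewrite /harmonic /= lef_pV2 ?posrE ?ltr0Sn // ler_nat.
have PF : (fun k => P (F k) + (harmonic k)%:E)%E @ \oo --> (P (\bigcap_k F k) + 0)%E.
  apply: cvgeD; last exact: cvge_harmonic.
    by rewrite fin_num_adde_defl.
  apply: nonincreasing_cvg_mu => //; last exact: bigcapT_measurable.
  by rewrite (le_lt_trans (probability_le1 P (mF 0%N))) ?ltry.
rewrite /win_prob -capF -[P _]adde0 -(cvg_lim _ PF) //.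
apply: lime_ge; first exact: cvgP PF.
by apply: nearW => k; apply: ha; exact: harmonic_gt0.
Qed.

Lemma stake_sum_ge_centred c n x : (forall i, 0 <= c i) ->
  ((p * series c n + centred_sum c 0 n x)%:E <= stake_sum c b x)%E.
Proof.
move=> c0; apply: le_trans (partial_stake_sum_le bernoulli_itv n x c0).
by rewrite lee_fin centred_sumE /series /= addrC subrK.
Qed.

Lemma stake_sum_le_centred c N M x : (forall i, 0 <= c i) ->
  series c @ \oo --> (1 : R) -> (N <= M)%N ->
  (stake_sum c b x <=
     (p + centred_sum c 0 N x + centred_sum c N M x + (1 - series c M))%:E)%E.
Proof.
move=> c0 c1 NM; apply: le_trans (stake_sum_le_partial bernoulli_itv M x c0 c1) _.
rewrite lee_fin lerD2r -addrA.
have -> : centred_sum c 0 N x + centred_sum c N M x = centred_sum c 0 M x.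
  by rewrite /centred_sum -big_cat_nat.
rewrite centred_sumE.
have : p * series c M <= p.
  by rewrite ler_piMr ?bernoulli_p_ge0 ?(nneg_series_le_cvg c0 c1).
rewrite /series /=; lra.
Qed.

Lemma win_prob_le_tail c t del N : stake_seq c -> 0 < del ->
  (win_prob P b c t <=
     P [set x | (t - 2 * del <= p + centred_sum c 0 N x)%R] + (del ^- 2 * c N)%:E)%E.
Proof.
move=> cs del0; have [c0 _ c1] := cs.
have [M NM rM] : exists2 M, (N <= M)%N & 1 - series c M <= del.
  have /cvgrPdist_le /(_ del del0) [M0 _ hM0] := c1.
  exists (maxn N M0); first exact: leq_maxl.
  exact: le_trans (ler_norm _) (hM0 _ (leq_maxr _ _)).
set E1 := [set x | t - 2 * del <= p + centred_sum c 0 N x].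
set E2 := [set x | del <= centred_sum c N M x].
have mE1 : measurable E1.
  apply: measurable_fun_ge; apply: measurable_funD; first exact: measurable_cst.
  exact: measurable_centred_sum.
have mE2 : measurable E2 by apply: measurable_fun_ge; exact: measurable_centred_sum.
have sub : [set x | (t%:E <= stake_sum c b x)%E] `<=` E1 `|` E2.
  move=> x /= /le_trans /(_ (stake_sum_le_centred x c0 c1 NM)); rewrite lee_fin.
  have [E2x|] := boolP (del <= centred_sum c N M x); first by right.
  by rewrite -ltNge => E2x tx; left; rewrite /E1 /=; lra.
apply: le_trans (le_measure P _ _ sub) _; rewrite ?inE.
- exact: measurable_win_set.
- exact: measurableU.
apply: le_trans (measureU2 P mE1 mE2) _; rewrite leeD2l //.
apply: le_trans (centred_sum_tail_le c N M del0) _.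
by rewrite lee_fin ler_wpM2l ?invr_ge0 ?exprn_ge0 ?(ltW del0) ?sqr_stake_sum_le.
Qed.

End bernoulli.

Section pi_fun.
Context {R : realType} {d : measure_display} {T : measurableType d}.
Variables (P : probability T R) (p : R) (b : nat -> T -> R).
Hypothesis hb : bernoulli_seq P p b.
Implicit Types (t s a eps : R) (c : nat -> R) (ts e : nat -> R) (cs : nat -> nat -> R).

Lemma cluster_win_prob_approx t ts e cs c s a :
  ts @ \oo --> t -> e @ \oo --> 0 -> (forall n, stake_seq (cs n)) ->
  (forall n, ((a - e n)%:E <= win_prob P b (cs n) (ts n))%E) ->
  (forall i, 0 <= c i) -> coord_cluster cs c -> series c @ \oo --> s ->
  forall eps, 0 < eps ->
  (a%:E <= win_prob P b c (t - p * (1 - s) - eps) + eps%:E)%E.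
Proof.
move=> tst e0 cs_stake ha c0 clc cs_s eps eps0.
have [p0 p1] := (bernoulli_p_ge0 hb, bernoulli_p_le1 hb).
set del := eps / 8; have del0 : 0 < del by rewrite divr_gt0.
have del8 : 8 * del = eps by rewrite /del mulrC divfK // pnatr_eq0.
have eps2 : 0 < eps / 2 by rewrite divr_gt0.
have [N sN hN] : exists2 N, s - series c N <= del & del ^- 2 * harmonic N <= eps / 2.
  have hd0 : 0 < eps * del ^+ 2 / 2 by rewrite !divr_gt0 ?mulr_gt0 ?exprn_gt0.
  have /cvgrPdist_le /(_ del del0) [N1 _ hN1] := cs_s.
  have /cvgrPdist_le /(_ _ hd0) [N2 _ hN2] := @cvg_harmonic R.
  exists (maxn N1 N2); first exact: le_trans (ler_norm _) (hN1 _ (leq_maxl _ _)).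
  have := hN2 _ (leq_maxr N1 N2); rewrite /= sub0r normrN ger0_norm ?harmonic_ge0 //.
  have d2 : 0 <= del ^- 2 by rewrite invr_ge0 exprn_ge0 // ltW.
  move/(ler_wpM2l d2) /le_trans; apply.
  by rewrite le_eqVlt; apply/orP; left; apply/eqP; field; exact: lt0r_neq0.
have /cvgrPdist_le /(_ del del0) near_t := tst.
have /cvgrPdist_le /(_ _ eps2) near_e := e0.
have [n0 _ hn0] := filterI near_t near_e.
set eta := del / N.+1%:R.
have eta0 : 0 < eta by rewrite divr_gt0 // ltr0Sn.
have Neta : N%:R * eta <= del.
  rewrite /eta mulrCA ler_piMr ?(ltW del0) // ler_pdivrMr ?ltr0Sn // mul1r ler_nat.
  exact: leqnSn.
have [n n0n close] := clc N eta eta0 n0.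
have [/= tsn en] := hn0 n n0n.
rewrite sub0r normrN in en.
set E1 := [set x | (ts n - 2 * del <= p + centred_sum p b (cs n) 0 N x)%R].
have mE1 : measurable E1.
  apply: measurable_fun_ge; apply: measurable_funD; first exact: measurable_cst.
  exact: (measurable_centred_sum hb).
have E1_win : (P E1 <= win_prob P b c (t - p * (1 - s) - eps))%E.
  apply: le_measure; rewrite ?inE //; first exact: (measurable_win_set hb).
  move=> x E1x; rewrite /E1 /= in E1x.
  apply: le_trans (stake_sum_ge_centred hb N x c0); rewrite lee_fin.
  have := centred_sum_le_close hb x close.
  have : p * (s - series c N) <= del.
    apply: le_trans sN; rewrite ler_piMl // subr_ge0.
    exact: nneg_series_le_cvg c0 cs_s N.
  move: tsn; rewrite ler_norml => /andP[tlo thi] ps cl.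
  lra.
have tail := le_trans (ha n) (win_prob_le_tail hb (ts n) N (cs_stake n) del0).
have csN : del ^- 2 * cs n N <= eps / 2.
  apply: le_trans hN; rewrite ler_wpM2l ?invr_ge0 ?exprn_ge0 ?(ltW del0) //.
  exact: stake_seq_le_harmonic.
rewrite -[a](subrK (e n)) EFinD.
apply: le_trans (leeD tail (lexx (e n)%:E)) _.
rewrite -addeA -EFinD; apply: leeD E1_win _; rewrite lee_fin.
have := le_trans (ler_norm _) en; lra.
Qed.

Lemma exists_stake_win_prob_ge t ts e cs a : p < t ->
  ts @ \oo --> t -> e @ \oo --> 0 -> (forall n, stake_seq (cs n)) ->
  (forall n, ((a - e n)%:E <= win_prob P b (cs n) (ts n))%E) ->
  exists c, stake_seq c /\ (a%:E <= win_prob P b c t)%E.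
Proof.
move=> pt tst e0 cs_stake ha.
have [c clc] := exists_coord_cluster (fun n i => stake_seq_le1 i (cs_stake n)).
have [c0 cn c_le1] := cluster_sub_stake cs_stake clc.
have nd : nondecreasing_seq (series c).
  by move=> m k mk; apply: (nondecreasing_series (P := xpredT) (m := 0%N)).
have cvc : cvgn (series c).
  by apply: nondecreasing_is_cvgn nd _; exists 1 => _ [n _ <-]; exact: c_le1.
set s := limn (series c); have cs_s : series c @ \oo --> s := cvc.
have s1 : s <= 1 by apply: limr_le cvc _; exact: nearW c_le1.
have s0 : 0 <= s by have := nneg_series_le_cvg c0 cs_s 0; rewrite /series /= big_geq.
have := win_prob_ge_approx hb c0 (cluster_win_prob_approx tst e0 cs_stake ha c0 clc cs_s).
have [s_gt0|] := boolP (0 < s); last first.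
  rewrite -leNgt => s_le0; have s_eq0 : s = 0 by apply/le_anti; rewrite s_le0 s0.
  have -> : win_prob P b c (t - p * (1 - s)) = 0%E.
    apply: (win_prob_eq0 P b c0); first by rewrite -s_eq0.
    by rewrite s_eq0 subr0 mulr1 subr_gt0.
  move=> a_le0; exists (cs 0%N); split => //.
  exact: le_trans a_le0 (measure_ge0 _ _).
move=> ha'; exists (fun i => c i / s); split; first exact: stake_seq_divr.
rewrite (win_prob_divr hb) //; apply: le_trans ha' (win_prob_nonincreasing hb c0 _).
by nra.
Qed.


Lemma stake_seq_unit : stake_seq (fun i => (i == 0%N)%:R : R).
Proof.
split => [i|[|i]|] //=; rewrite ?ler01 //.
apply: cvg_near_cst; exists 1%N => // n /= n1.
rewrite /series /= big_ltn //= big1_seq ?addr0 // => i /andP[_].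
by rewrite mem_index_iota; case: i.
Qed.

Lemma win_prob_le_pi_fun c t : stake_seq c -> (win_prob P b c t <= pi_fun P b t)%E.
Proof. by move=> cs; apply: ereal_sup_ubound; exists c. Qed.

Lemma pi_fun_fin_num t : pi_fun P b t \is a fin_num.
Proof.
rewrite ge0_fin_numE; last first.
  exact: le_trans (measure_ge0 _ _) (win_prob_le_pi_fun t stake_seq_unit).
apply: le_lt_trans (ltry 1); apply: ge_ereal_sup => _ [c [c0 _ _] <-].
by apply: probability_le1; exact: (measurable_win_set hb t c0).
Qed.

Lemma pi_fun_nonincreasing s t : s <= t -> (pi_fun P b t <= pi_fun P b s)%E.
Proof.
move=> st; apply: ge_ereal_sup => _ [c cs <-].
apply: le_trans (win_prob_le_pi_fun s cs); have [c0 _ _] := cs.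
exact: (win_prob_nonincreasing hb c0 st).
Qed.

Lemma exists_stake_near_pi_fun t a n : (a%:E <= pi_fun P b t)%E ->
  exists c, stake_seq c /\ ((a - harmonic n)%:E <= win_prob P b c t)%E.
Proof.
move=> api; have : ((a - harmonic n)%:E < pi_fun P b t)%E.
  by apply: lt_le_trans api; rewrite lte_fin ltrBlDr ltrDl harmonic_gt0.
by move/ereal_sup_gtP => [_ [c cs <-] /ltW]; exists c.
Qed.

Lemma exists_stake_pi_fun_cvg t ts a : p < t -> ts @ \oo --> t ->
  (forall n, (a%:E <= pi_fun P b (ts n))%E) ->
  exists c, stake_seq c /\ (a%:E <= win_prob P b c t)%E.
Proof.
move=> pt tst api.
have /choice [cs csP] : forall n, exists c,
    stake_seq c /\ ((a - harmonic n)%:E <= win_prob P b c (ts n))%E.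
  by move=> n; exact: exists_stake_near_pi_fun.
apply: (exists_stake_win_prob_ge pt tst (@cvg_harmonic R)) => n.
- exact: (csP n).1.
- exact: (csP n).2.
Qed.

Lemma pi_fun_attained t : p < t ->
  exists c, stake_seq c /\ pi_fun P b t = win_prob P b c t.
Proof.
move=> pt; have [c [cs ac]] : exists c,
    stake_seq c /\ ((fine (pi_fun P b t))%:E <= win_prob P b c t)%E.
  by apply: (exists_stake_pi_fun_cvg pt (cvg_cst t)) => _; rewrite fineK ?pi_fun_fin_num.
exists c; split => //; apply/le_anti; rewrite win_prob_le_pi_fun // andbT.
by rewrite -(fineK (pi_fun_fin_num t)).
Qed.

Lemma pi_fun_left_continuous t : p < t ->
  pi_fun P b s @[s --> t^'-] --> pi_fun P b t.
Proof.
move=> pt; rewrite -(fineK (pi_fun_fin_num t)); apply/fine_cvgP; split.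
  by apply: nearW => s; exact: pi_fun_fin_num.
set a := fine (pi_fun P b t); apply/cvgrPdist_le => e e0.
have lower : \forall s \near t^'-, a <= fine (pi_fun P b s).
  near=> s; rewrite -lee_fin !fineK ?pi_fun_fin_num //.
  by apply: pi_fun_nonincreasing; apply: ltW; near: s; exact: nbhs_left_lt.
have upper : \forall s \near t^'-, fine (pi_fun P b s) <= a + e.
  apply: contrapT => /not_near_at_leftP far.
  have /choice [ts tsP] : forall n, exists s,
      t - harmonic n < s < t /\ a + e < fine (pi_fun P b s).
    move=> n; have [s sn /negP] := far (PosNum (harmonic_gt0 n)).
    by rewrite -ltNge => far_s; exists s.
  have tst : ts @ \oo --> t.
    apply: (@squeeze_cvgr _ _ _ _ (fun n => t - harmonic n) (fun _ => t)).
    - by apply: nearW => n; have [/andP[lo hi] _] := tsP n; rewrite !ltW.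
    - by rewrite -[X in _ --> X]subr0; apply: cvgB; [exact: cvg_cst|exact: cvg_harmonic].
    - exact: cvg_cst.
  have [c [cs ac]] : exists c, stake_seq c /\ ((a + e)%:E <= win_prob P b c t)%E.
    apply: (exists_stake_pi_fun_cvg pt tst) => n.
    by rewrite -(fineK (pi_fun_fin_num (ts n))) lee_fin ltW // (tsP n).2.
  have := le_trans ac (win_prob_le_pi_fun t cs).
  by rewrite -(fineK (pi_fun_fin_num t)) lee_fin -/a; lra.
near=> s; have lo : a <= fine (pi_fun P b s) by near: s.
have hi : fine (pi_fun P b s) <= a + e by near: s.
by rewrite /= ler_norml; apply/andP; split; lra.
Unshelve. all: end_near.
Qed.

End pi_fun.

Theorem theorem7 (R : realType) (d : measure_display) (T : measurableType d)
  (P : probability T R) (p : R) (b : nat -> T -> R) :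
  bernoulli_seq P p b -> 0 <= p ->
  (forall t : R, p < t -> t <= 1 ->
     exists c : nat -> R, stake_seq c /\ pi_fun P b t = win_prob P b c t) /\
  (forall t : R, p < t -> t <= 1 ->
     pi_fun P b s @[s --> t^'-] --> pi_fun P b t).
Proof.
move=> hb _; split => t pt _.
- exact: (pi_fun_attained hb).
- exact: (pi_fun_left_continuous hb).
Qed.
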